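(* Let $(\mathcal{A}_\Lambda,\partial_\Lambda)$ be a filtered Chekanov–Eliashberg DGA over $\mathbb{Z}_2$ generated by $q_1,\dots,q_n$, let $k$ be a positive integer, and let $(S_k\mathcal{A}_\Lambda,\partial_\Lambda)$ be its grading-$k$ stabilization, with additional generators $e_k,e_{k-1}$. Let $\delta>0$. If the height filtration of $\mathcal{A}_\Lambda$ is extended to $S_k\mathcal{A}_\Lambda$ in such a way that $0<h(e_k)-h(e_{k-1})<2\delta$, then the persistent linearized contact homologies of $(\mathcal{A}_\Lambda,\partial_\Lambda)$ and $(S_k\mathcal{A}_\Lambda,\partial_\Lambda)$ (with respect to an augmentation $\epsilon$ of $\mathcal{A}_\Lambda$ and its extension to $S_k\mathcal{A}_\Lambda$ by $\epsilon(e_k)=\epsilon(e_{k-1})=0$) are $2\delta$-interleaved.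
   Context: A filtered Chekanov–Eliashberg DGA: a Chekanov–Eliashberg DGA (free noncommutative graded algebra over $\mathbb{Z}_2$ on generators, with differential) together with heights $h(q_i)>0$, extended by $h(\text{word})=$ sum of letter heights and $h(\text{sum})=$ max, such that the differential strictly decreases height. The grading-$k$ stabilization $S_k\mathcal{A}_\Lambda$ is generated by $e_k,e_{k-1},q_1,\dots,q_n$ with $|e_k|=k$, $|e_{k-1}|=k-1$, other gradings unchanged, and differential $\partial(e_k)=e_{k-1}$, $\partial(e_{k-1})=0$, agreeing with $\partial_\Lambda$ on the $q_i$. The persistent linearized contact homology is $t\mapsto H_\ast(A^t,\partial_1^\epsilon)$, where $\partial_1^\epsilon$ is the linearized differential with respect to the augmentation $\epsilon$ on the vector space spanned by the generators and $A^t$ is spanned by generators of height $\le t$, with transfer maps induced by inclusion. Persistence modules $U^\bullet,V^\bullet$ are $2\delta$-interleaved if there are maps $\varphi^t:U^t\to V^{t+\delta}$, $\psi^t:V^t\to U^{t+\delta}$ commuting with transfer maps with $\psi^{t+\delta}\varphi^t$ and $\varphi^{t+\delta}\psi^t$ equal to the transfer maps from $t$ to $t+2\delta$. *)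

From Stdlib Require Import Reals.
From mathcomp Require Import all_boot all_order all_algebra.
Set Implicit Arguments.
Unset Strict Implicit.
Unset Printing Implicit Defensive.
Import GRing.Theory.
Local Open Scope ring_scope.

(* Free noncommutative algebra over Z_2 on a finite set G of generators.     *)
(* A word is a [seq G]; an algebra element is represented by a [seq (seq G)] *)
(* read as a formal sum of words over Z_2: the coefficient of a word [w] is  *)
(* the parity of its number of occurrences.                                  *)

Definition coef (G : eqType) (p : seq (seq G)) (w : seq G) : bool :=
  odd (count_mem w p).

Record dga (G : finType) := DGA {
  deg : G -> int;
  dif : G -> seq (seq G)
}.

Section DGADefs.
Variables (G : finType) (A : dga G).

Definition deg_word (w : seq G) : int := \sum_(x <- w) deg A x.

(* Leibniz rule over Z_2 (no signs):
   d(x1...xm) = sum_j x1..x_{j-1} (d x_j) x_{j+1}..xm *)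
Fixpoint dif_word (w : seq G) : seq (seq G) :=
  match w with
  | [::] => [::]
  | x :: w' => [seq u ++ w' | u <- dif A x] ++ [seq x :: u | u <- dif_word w']
  end.

Definition dif_poly (p : seq (seq G)) : seq (seq G) := flatten (map dif_word p).

Definition is_dga : Prop :=
  (forall q w, coef (dif A q) w -> deg_word w = deg A q - 1) /\
  (forall q w, ~~ coef (dif_poly (dif A q)) w).

(* Augmentation eps : A -> Z_2 (graded DGA map, d-closed): eps(q) = 1 only for
   degree-0 generators, eps is multiplicative, eps o d = 0. *)
Definition eps_word (eps : G -> bool) (w : seq G) : bool := all eps w.

Definition is_augmentation (eps : G -> bool) : Prop :=
  (forall q, eps q -> deg A q = 0) /\
  (forall q, ~~ odd (count (eps_word eps) (dif A q))).

(* Heights: h(q) > 0, h(word) = sum of letter heights, h(sum) = max over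
   words with nonzero coefficient; the differential strictly decreases h. *)
Definition height_word (h : G -> R) (w : seq G) : R :=
  foldr Rplus R0 (map h w).

Definition is_filtered (h : G -> R) : Prop :=
  (forall q, Rlt R0 (h q)) /\
  (forall q w, coef (dif A q) w -> Rlt (height_word h w) (h q)).

Definition filtered_CE_dga (h : G -> R) : Prop := is_dga /\ is_filtered h.

(* Linearized differential with respect to eps: conjugate by the DGA
   automorphism phi_eps(q) = q + eps(q) and keep the word-length-one part. *)
Fixpoint phi_word (eps : G -> bool) (w : seq G) : seq (seq G) :=
  match w with
  | [::] => [:: [::]]
  | x :: w' => [seq x :: u | u <- phi_word eps w'] ++
               (if eps x then phi_word eps w' else [::])
  end.

Definition lin_dif_gen (eps : G -> bool) (q : G) : {ffun G -> 'F_2} :=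
  [ffun g => (count_mem [:: g] (flatten (map (phi_word eps) (dif A q))))%:R].

Definition lin_dif (eps : G -> bool) (v : {ffun G -> 'F_2}) : {ffun G -> 'F_2} :=
  [ffun g => \sum_(q : G) v q * lin_dif_gen eps q g].

End DGADefs.

(* Filtered chain complexes (V = span of generators, d) and the persistence *)
(* module t |-> H_*(A^t, d), A^t = span of generators of height <= t.       *)
Section Persistence.
Variables (G : finType) (h : G -> R) (d : {ffun G -> 'F_2} -> {ffun G -> 'F_2}).

Definition in_filt (t : R) (v : {ffun G -> 'F_2}) : Prop :=
  forall g, v g != 0 -> Rle (h g) t.

Definition cycle_at (t : R) (v : {ffun G -> 'F_2}) : Prop :=
  in_filt t v /\ d v = 0.

Definition boundary_at (t : R) (v : {ffun G -> 'F_2}) : Prop :=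
  exists u, in_filt t u /\ d u = v.

End Persistence.

(* A family of maps phi^t : H(U^t) -> H(V^{t+delta}) of the persistence
   modules of homologies, represented (as maps out of quotients always are)
   by functions on chains: phi t sends cycles of U^t to cycles of V^{t+delta},
   is additive modulo boundaries, sends boundaries to boundaries (so it
   induces a well-defined Z_2-linear map on homology), and commutes with the
   transfer maps (induced by inclusions) on homology. *)
Definition pmod_shift_map (G1 G2 : finType)
  (h1 : G1 -> R) (d1 : {ffun G1 -> 'F_2} -> {ffun G1 -> 'F_2})
  (h2 : G2 -> R) (d2 : {ffun G2 -> 'F_2} -> {ffun G2 -> 'F_2})
  (delta : R) (phi : R -> {ffun G1 -> 'F_2} -> {ffun G2 -> 'F_2}) : Prop :=
  (forall t z, cycle_at h1 d1 t z -> cycle_at h2 d2 (Rplus t delta) (phi t z)) /\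
  (forall t z1 z2, cycle_at h1 d1 t z1 -> cycle_at h1 d1 t z2 ->
     boundary_at h2 d2 (Rplus t delta) (phi t (z1 + z2) - (phi t z1 + phi t z2))) /\
  (forall t b, boundary_at h1 d1 t b -> boundary_at h2 d2 (Rplus t delta) (phi t b)) /\
  (forall s t z, Rle s t -> cycle_at h1 d1 s z ->
     boundary_at h2 d2 (Rplus t delta) (phi t z - phi s z)).

Definition interleaved2 (G1 G2 : finType)
  (h1 : G1 -> R) (d1 : {ffun G1 -> 'F_2} -> {ffun G1 -> 'F_2})
  (h2 : G2 -> R) (d2 : {ffun G2 -> 'F_2} -> {ffun G2 -> 'F_2})
  (delta : R) : Prop :=
  exists (phi : R -> {ffun G1 -> 'F_2} -> {ffun G2 -> 'F_2})
         (psi : R -> {ffun G2 -> 'F_2} -> {ffun G1 -> 'F_2}),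
    pmod_shift_map h1 d1 h2 d2 delta phi /\
    pmod_shift_map h2 d2 h1 d1 delta psi /\
    (forall t z, cycle_at h1 d1 t z ->
       boundary_at h1 d1 (Rplus t (Rplus delta delta)) (psi (Rplus t delta) (phi t z) - z)) /\
    (forall t z, cycle_at h2 d2 t z ->
       boundary_at h2 d2 (Rplus t (Rplus delta delta)) (phi (Rplus t delta) (psi t z) - z)).

(* Grading-k stabilization: generators G + bool, with inr true = e_k and    *)
(* inr false = e_{k-1}.                                                     *)
Definition stab (G : finType) (A : dga G) (k : int) : dga (G + bool)%type :=
  DGA (fun x => match x with
                | inl g => deg A g
                | inr true => k
                | inr false => k - 1
                end)
      (fun x => match x with
                | inl g => map (map inl) (dif A g)
                | inr true => [:: [:: inr false]]
                | inr false => [::]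
                end).

Definition stab_height (G : finType) (h : G -> R) (hek hek1 : R) : G + bool -> R :=
  fun x => match x with inl g => h g | inr true => hek | inr false => hek1 end.

Definition stab_eps (G : finType) (eps : G -> bool) : G + bool -> bool :=
  fun x => match x with inl g => eps g | inr _ => false end.

From Stdlib Require Import Reals Lra.
From mathcomp Require Import all_boot all_order all_algebra.
Set Implicit Arguments.
Unset Strict Implicit.
Unset Printing Implicit Defensive.
Import GRing.Theory.
Local Open Scope ring_scope.

(* The linearized complex of the stabilization is the original complex plus the
   acyclic two-term complex [e_k -> e_{k-1}]. Inclusion and projection are
   filtration-preserving chain maps, projection after inclusion is the identity,
   and inclusion after projection is chain homotopic to the identity through
   [e_{k-1} |-> e_k], which raises the height by h(e_k) - h(e_{k-1}) < 2 delta.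
   A filtered homotopy equivalence whose homotopies raise heights by at most
   2 delta induces a 2 delta-interleaving of the persistent homologies. *)

Section FilteredComplex.
Variables (G : finType) (h : G -> R) (d : {ffun G -> 'F_2} -> {ffun G -> 'F_2}).

Lemma in_filt_le s t v : Rle s t -> in_filt h s v -> in_filt h t v.
Proof. by move=> le_st hv g /hv; lra. Qed.

Lemma in_filt0 t : in_filt h t 0.
Proof. by move=> g; rewrite ffunE eqxx. Qed.

Hypothesis d0 : d 0 = 0.

Lemma boundary_at0 t : boundary_at h d t 0.
Proof. by exists 0; split; [exact: in_filt0 | exact: d0]. Qed.

Lemma chain_homotopy_boundary (p H : {ffun G -> 'F_2} -> {ffun G -> 'F_2}) s t z :
  H 0 = 0 ->
  (forall t v, in_filt h t v -> in_filt h (Rplus t s) (H v)) ->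
  (forall v, p v - v = d (H v) + H (d v)) ->
  cycle_at h d t z -> boundary_at h d (Rplus t s) (p z - z).
Proof.
move=> H0 H_filt pH [zt dz0]; exists (H z); split; first exact: H_filt.
by rewrite pH dz0 H0 addr0.
Qed.

End FilteredComplex.

Section FilteredChainMap.
Variables (G1 G2 : finType) (h1 : G1 -> R) (h2 : G2 -> R).
Variables (d1 : {ffun G1 -> 'F_2} -> {ffun G1 -> 'F_2}).
Variables (d2 : {ffun G2 -> 'F_2} -> {ffun G2 -> 'F_2}).
Variables (f : {ffun G1 -> 'F_2} -> {ffun G2 -> 'F_2}) (delta : R).
Hypotheses (d2_0 : d2 0 = 0) (delta_ge0 : Rle R0 delta).
Hypothesis f_add : {morph f : u v / u + v}.
Hypothesis f_chain : forall v, d2 (f v) = f (d1 v).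
Hypothesis f_filt : forall t v, in_filt h1 t v -> in_filt h2 t (f v).

Lemma morph_add0 : f 0 = 0.
Proof. by apply: (addrI (f 0)); rewrite -f_add !addr0. Qed.

Lemma pmod_shift_map_chain_map : pmod_shift_map h1 d1 h2 d2 delta (fun=> f).
Proof.
have le_t t : Rle t (Rplus t delta) by lra.
split; [|split; [|split]].
- move=> t z [zt dz0]; split; first exact/(in_filt_le (le_t t))/f_filt.
  by rewrite f_chain dz0 morph_add0.
- by move=> t z1 z2 _ _; rewrite f_add subrr; exact: boundary_at0.
- move=> t _ [u [ut <-]]; exists (f u); split; last exact: f_chain.
  exact/(in_filt_le (le_t t))/f_filt.
- by move=> s t z _ _; rewrite subrr; exact: boundary_at0.
Qed.

End FilteredChainMap.

Section HomotopyEquivalence.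
Variables (G1 G2 : finType) (h1 : G1 -> R) (h2 : G2 -> R).
Variables (d1 : {ffun G1 -> 'F_2} -> {ffun G1 -> 'F_2}).
Variables (d2 : {ffun G2 -> 'F_2} -> {ffun G2 -> 'F_2}).
Variables (f : {ffun G1 -> 'F_2} -> {ffun G2 -> 'F_2}).
Variables (g : {ffun G2 -> 'F_2} -> {ffun G1 -> 'F_2}).
Variables (H1 : {ffun G1 -> 'F_2} -> {ffun G1 -> 'F_2}).
Variables (H2 : {ffun G2 -> 'F_2} -> {ffun G2 -> 'F_2}).
Variable delta : R.
Hypotheses (d1_0 : d1 0 = 0) (d2_0 : d2 0 = 0) (delta_ge0 : Rle R0 delta).
Hypotheses (f_add : {morph f : u v / u + v}) (g_add : {morph g : u v / u + v}).
Hypotheses (f_chain : forall v, d2 (f v) = f (d1 v)).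
Hypotheses (g_chain : forall v, d1 (g v) = g (d2 v)).
Hypotheses (f_filt : forall t v, in_filt h1 t v -> in_filt h2 t (f v)).
Hypotheses (g_filt : forall t v, in_filt h2 t v -> in_filt h1 t (g v)).
Hypotheses (H1_0 : H1 0 = 0) (H2_0 : H2 0 = 0).
Hypothesis H1_filt :
  forall t v, in_filt h1 t v -> in_filt h1 (Rplus t (Rplus delta delta)) (H1 v).
Hypothesis H2_filt :
  forall t v, in_filt h2 t v -> in_filt h2 (Rplus t (Rplus delta delta)) (H2 v).
Hypothesis gf_homotopy : forall v, g (f v) - v = d1 (H1 v) + H1 (d1 v).
Hypothesis fg_homotopy : forall v, f (g v) - v = d2 (H2 v) + H2 (d2 v).

Lemma interleaved2_homotopy_equivalence : interleaved2 h1 d1 h2 d2 delta.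
Proof.
exists (fun=> f), (fun=> g); split; [|split; [|split]].
- exact: pmod_shift_map_chain_map.
- exact: pmod_shift_map_chain_map.
- move=> t z; exact: (chain_homotopy_boundary H1_0 H1_filt gf_homotopy).
- move=> t z; exact: (chain_homotopy_boundary H2_0 H2_filt fg_homotopy).
Qed.

End HomotopyEquivalence.

Lemma lin_dif0 (G : finType) (A : dga G) (eps : G -> bool) : lin_dif A eps 0 = 0.
Proof. by apply/ffunP => g; rewrite !ffunE big1 // => q _; rewrite ffunE mul0r. Qed.

Definition stab_incl {G : finType} (z : {ffun G -> 'F_2}) :
    {ffun (G + bool)%type -> 'F_2} :=
  [ffun x => if x is inl g then z g else 0].

Definition stab_proj {G : finType} (w : {ffun (G + bool)%type -> 'F_2}) :
    {ffun G -> 'F_2} :=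
  [ffun g => w (inl g)].

Definition stab_homotopy {G : finType} (w : {ffun (G + bool)%type -> 'F_2}) :
    {ffun (G + bool)%type -> 'F_2} :=
  [ffun x => if x == inr true then w (inr false) else 0].

Section Stabilization.
Variables (G : finType) (A : dga G) (eps : G -> bool) (k : int).
Local Notation SA := (stab A k).
Local Notation seps := (stab_eps eps).
Local Notation d := (lin_dif A eps).
Local Notation sd := (lin_dif SA seps).

Lemma phi_word_stab_inl w : phi_word seps (map inl w) = map (map inl) (phi_word eps w).
Proof.
elim: w => [|x w IHw] //=.
by rewrite IHw map_cat -!map_comp; case: (eps x).
Qed.

Lemma lin_dif_gen_stab_inl q x :
  lin_dif_gen SA seps (inl q) x = if x is inl g then lin_dif_gen A eps q g else 0.
Proof.
have flatten_inl (D : seq (seq G)) :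
    flatten (map (phi_word seps) (map (map inl) D)) =
    map (map inl) (flatten (map (phi_word eps) D)).
  by elim: D => [|w D IHD] //=; rewrite phi_word_stab_inl IHD map_cat.
rewrite !ffunE /= flatten_inl count_map; case: x => [g|b]; rewrite ?ffunE.
  by congr (_%:R); apply: eq_count => -[|a [|c u]].
by rewrite (@eq_count _ _ pred0) ?count_pred0 // => -[|a [|c u]].
Qed.

Lemma lin_dif_gen_stab_inr b x :
  lin_dif_gen SA seps (inr b) x = if b then (x == inr false)%:R else 0.
Proof. by case: b; rewrite !ffunE //= addn0 eqseq_cons andbT eq_sym. Qed.

Lemma lin_dif_stab_inl w g : sd w (inl g) = d (stab_proj w) g.
Proof.
rewrite !ffunE big_sumType /= big_bool /= !lin_dif_gen_stab_inr /= !mulr0 !addr0.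
by apply: eq_bigr => q _; rewrite lin_dif_gen_stab_inl !ffunE.
Qed.

Lemma lin_dif_stab_inr w b : sd w (inr b) = if b then 0 else w (inr true).
Proof.
rewrite ffunE big_sumType /= big_bool /= !lin_dif_gen_stab_inr /= mulr0 addr0.
rewrite big1 ?add0r => [|q _]; last by rewrite lin_dif_gen_stab_inl mulr0.
by case: b; rewrite /= ?mulr0 ?mulr1.
Qed.

Lemma lin_dif_stab_incl z : sd (stab_incl z) = stab_incl (d z).
Proof.
apply/ffunP => -[g|b]; rewrite ?lin_dif_stab_inl ?lin_dif_stab_inr !ffunE //.
  by apply: eq_bigr => q _; rewrite !ffunE.
by case: b.
Qed.

Lemma lin_dif_stab_proj w : d (stab_proj w) = stab_proj (sd w).
Proof. by apply/ffunP => g; rewrite [RHS]ffunE lin_dif_stab_inl. Qed.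

Lemma stab_incl_add : {morph @stab_incl G : u v / u + v}.
Proof. by move=> u v; apply/ffunP => -[g|b]; rewrite !ffunE // addr0. Qed.

Lemma stab_proj_add : {morph @stab_proj G : u v / u + v}.
Proof. by move=> u v; apply/ffunP => g; rewrite !ffunE. Qed.

Lemma stab_homotopy0 : stab_homotopy 0 = 0 :> {ffun (G + bool)%type -> 'F_2}.
Proof. by apply/ffunP => x; rewrite !ffunE; case: eqP. Qed.

Lemma stab_proj_incl (z : {ffun G -> 'F_2}) : stab_proj (stab_incl z) = z.
Proof. by apply/ffunP => g; rewrite !ffunE. Qed.

Lemma stab_homotopyP w :
  stab_incl (stab_proj w) - w = sd (stab_homotopy w) + stab_homotopy (sd w).
Proof.
have proj_homotopy (u : {ffun (G + bool)%type -> 'F_2}) :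
    stab_proj (stab_homotopy u) = 0.
  by apply/ffunP => g; rewrite !ffunE.
have opp_F2 (a : 'F_2) : - a = a by apply: oppr_pchar2; apply: pchar_Fp.
apply/ffunP => -[g|[|]]; rewrite [in RHS]ffunE ?lin_dif_stab_inl ?lin_dif_stab_inr.
- by rewrite proj_homotopy lin_dif0 !ffunE subrr addr0.
- by rewrite [stab_homotopy _ _]ffunE /= lin_dif_stab_inr !ffunE /= sub0r opp_F2 add0r.
- by rewrite !ffunE /= sub0r opp_F2 addr0.
Qed.

Section Heights.
Variables (h : G -> R) (hek hek1 : R).
Local Notation sh := (stab_height h hek hek1).

Lemma in_filt_stab_incl t z : in_filt h t z -> in_filt sh t (stab_incl z).
Proof. by move=> zt [g|b]; rewrite ffunE // => /zt. Qed.

Lemma in_filt_stab_proj t w : in_filt sh t w -> in_filt h t (stab_proj w).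
Proof. by move=> wt g; rewrite ffunE => /wt. Qed.

Lemma in_filt_stab_homotopy s t w :
  Rle (Rminus hek hek1) s -> in_filt sh t w -> in_filt sh (Rplus t s) (stab_homotopy w).
Proof.
move=> gap wt x; rewrite ffunE.
by case: (x =P inr true) => [-> /wt /= |_]; [lra | rewrite eqxx].
Qed.

End Heights.
End Stabilization.

Theorem proposition4p5 (n : nat) (A : dga 'I_n) (h : 'I_n -> R)
  (eps : 'I_n -> bool) (k : nat) (delta hek hek1 : R) :
  filtered_CE_dga A h ->
  is_augmentation A eps ->
  (0 < k)%N ->
  Rlt R0 delta ->
  Rlt R0 hek1 ->
  Rlt R0 (Rminus hek hek1) ->
  Rlt (Rminus hek hek1) (Rplus delta delta) ->
  interleaved2 h (lin_dif A eps)
               (stab_height h hek hek1) (lin_dif (stab A (Posz k)) (stab_eps eps))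
               delta.
Proof.
(* Only delta > 0 and the gap bound h(e_k) - h(e_{k-1}) < 2 delta matter. *)
move=> _ _ _ delta_gt0 _ _ gap_lt.
refine (interleaved2_homotopy_equivalence (H1 := fun=> 0)
          (lin_dif0 _ _) (lin_dif0 _ _) _ (@stab_incl_add _) (@stab_proj_add _)
          (@lin_dif_stab_incl _ _ _ _) (@lin_dif_stab_proj _ _ _ _)
          (@in_filt_stab_incl _ _ _ _) (@in_filt_stab_proj _ _ _ _)
          erefl (@stab_homotopy0 _) _ _ _ (@stab_homotopyP _ _ _ _)).
- lra.
- by move=> t v _; exact: in_filt0.
- by move=> t v; apply: in_filt_stab_homotopy; lra.
- by move=> v; rewrite stab_proj_incl subrr lin_dif0 addr0.
Qed.
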